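(* Let $F$ be an Archimedean vector lattice and $E\subset F$ a sublattice. If $E$ is regular and the ideal $I(E)$ generated by $E$ is a projection band, then the inclusion of $E$ into $F$ is an order embedding. Conversely, if $E$ is order dense in $I(E)$ and the inclusion of $E$ into $F$ is an order embedding, then $I(E)$ is a projection band.
   Context: A sublattice $E\subset F$ is regular if for every $G\subset E$ with $\bigwedge_E G=0$ (infimum in $E$) one has $\bigwedge_F G=0$. $E$ is order dense in a sublattice $H\supset E$ if for every $h\in H$ with $h>0$ there is $e\in E$ with $0<e\le h$. An ideal $H$ is a projection band if $F=H+H^d$, where $H^d$ is the disjoint complement. A net order converges to $f$ if there is a set $G$ with $\bigwedge G=0$ such that for every $g\in G$ the net is eventually in $[f-g,f+g]$. The inclusion of $E$ into $F$ is an order embedding if for nets in $E$ and points of $E$, order convergence in $E$ is equivalent to order convergence in $F$. *)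

(* Real vector lattices are encoded explicitly: a carrier
   F : lmodType R over R : realType, an order relation [le] and a binary
   operation [join] which is required to be the supremum of two elements. *)
From HB Require Import structures.
From mathcomp Require Import all_boot all_order all_algebra.
From mathcomp Require Import reals.
Set Implicit Arguments. Unset Strict Implicit. Unset Printing Implicit Defensive.
Import Order.TTheory GRing.Theory Num.Theory.
Local Open Scope ring_scope.

Section VL.
Variables (R : realType) (F : lmodType R) (le : F -> F -> Prop) (join : F -> F -> F).

Definition vector_lattice : Prop :=
  [/\ (forall x, le x x),
      (forall x y, le x y -> le y x -> x = y),
      (forall x y z, le x y -> le y z -> le x z),
      (forall x y z, le x y -> le (x + z) (y + z))
        /\
      (forall (a : R) x y, 0 <= a -> le x y -> le (a *: x) (a *: y)) &
      (forall x y, le x (join x y) /\ le y (join x y) /\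
                      forall z, le x z -> le y z -> le (join x y) z)].

Definition meet (x y : F) : F := - join (- x) (- y).
Definition absv (x : F) : F := join x (- x).
Definition ltv (x y : F) : Prop := le x y /\ x <> y.

Definition archimedean : Prop :=
  forall x y : F, le 0 x -> (forall n : nat, le (x *+ n) y) -> x = 0.

Definition subspace (E : F -> Prop) : Prop :=
  [/\ E 0, (forall x y, E x -> E y -> E (x + y)) &
      (forall (a : R) x, E x -> E (a *: x))].

Definition sublattice (E : F -> Prop) : Prop :=
  subspace E /\ (forall x y, E x -> E y -> E (join x y) /\ E (meet x y)).

Definition inf_in (E G : F -> Prop) (g : F) : Prop :=
  [/\ E g, (forall x, G x -> le g x) &
      (forall h, E h -> (forall x, G x -> le h x) -> le h g)].

Definition regular (E : F -> Prop) : Prop :=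
  forall G : F -> Prop, (forall x, G x -> E x) ->
    inf_in E G 0 -> inf_in (fun _ => True) G 0.

Definition order_dense (E H : F -> Prop) : Prop :=
  forall h, H h -> ltv 0 h -> exists e, E e /\ ltv 0 e /\ le e h.

Definition ideal (I : F -> Prop) : Prop :=
  subspace I /\ (forall x y, I x -> le (absv y) (absv x) -> I y).

Definition ideal_gen (E : F -> Prop) : F -> Prop :=
  fun x => forall I, ideal I -> (forall e, E e -> I e) -> I x.

Definition disj_compl (H : F -> Prop) : F -> Prop :=
  fun x => forall h, H h -> meet (absv x) (absv h) = 0.

Definition projection_band (H : F -> Prop) : Prop :=
  ideal H /\ (forall f, exists h k, H h /\ disj_compl H k /\ f = h + k).

Definition directed (A : Type) (leA : A -> A -> Prop) : Prop :=
  [/\ inhabited A, (forall a, leA a a),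
      (forall a b c, leA a b -> leA b c -> leA a c) &
      (forall a b, exists c, leA a c /\ leA b c)].

(* order convergence of the net x to f, computed in the sublattice E
   (take E := fun _ => True for convergence in F) *)
Definition oconv_in (E : F -> Prop) (A : Type) (leA : A -> A -> Prop)
    (x : A -> F) (f : F) : Prop :=
  exists G : F -> Prop, (forall g, G g -> E g) /\ inf_in E G 0 /\
    forall g, G g -> exists a0, forall a, leA a0 a ->
      le (f - g) (x a) /\ le (x a) (f + g).

Definition order_embedding (E : F -> Prop) : Prop :=
  forall (A : Type) (leA : A -> A -> Prop) (x : A -> F) (f : F),
    directed leA -> (forall a, E (x a)) -> E f ->
    (oconv_in E leA x f <-> oconv_in (fun _ => True) leA x f).

End VL.

(* If [y_a = |x_a - f|] is eventually below each [g] of a set with infimum [0]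
   in [F], take as witness in [E] the eventual upper bounds of [y] lying in [E].
   As [I(E)] is a projection band, [y_a <= g] forces [y_a <= g_I <= e0] for the
   component [g_I] of [g] in [I(E)] and some [e0] in [E]. If [h] in [E] is below
   every eventual upper bound, the tail [{(h^+ - y_a)^+}] has infimum [0] in [E]
   by an Archimedean argument, hence in [F] by regularity; since [(h^+ - g)^+]
   is below this tail, [h^+ <= g] for every [g], so [h <= 0]. Convergence in
   [E] gives convergence in [F] directly by regularity.

   Conversely, for [f >= 0] the net [u / (n + 1)], [u] in [E] with [0 <= u <= f],
   order converges to [0] in [F], hence in [E], which yields [e] in [E]
   dominating [E] on [[0, f]]. Then [f = (f /\ e) + (f - e)^+] with [f /\ e] in
   [I(E)], and [(f - e)^+] is disjoint from [I(E)]: by order density it suffices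
   that no [0 < u] in [E] lies below [(f - e)^+], and for such [u] the elements
   [(n + 1) u /\ (e + u)] of [E] lie in [[0, f]], hence below [e], so that
   [n u <= e] for all [n]. *)

From Pilot Require Import Defs.
From HB Require Import structures.
From mathcomp Require Import all_boot all_order all_algebra.
From mathcomp Require Import reals.
From Stdlib Require Import Classical_Prop.
Set Implicit Arguments. Unset Strict Implicit. Unset Printing Implicit Defensive.
Import GRing.Theory Num.Theory.
Local Open Scope ring_scope.

Definition prod_rel (A B : Type) (leA : A -> A -> Prop) (leB : B -> B -> Prop)
    (a b : A * B) : Prop :=
  leA a.1 b.1 /\ leB a.2 b.2.

Lemma directed_prod (A B : Type) (leA : A -> A -> Prop) (leB : B -> B -> Prop) :
  directed leA -> directed leB -> directed (prod_rel leA leB).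
Proof.
move=> [[a0] reflA transA dirA] [[b0] reflB transB dirB]; split.
- exact: inhabits (a0, b0).
- by move=> a; split.
- by move=> a b c [ab1 ab2] [bc1 bc2]; split; [apply: transA bc1|apply: transB bc2].
- move=> a b; have [c [ac bc]] := dirA a.1 b.1; have [d [ad bd]] := dirB a.2 b.2.
  by exists (c, d).
Qed.

Lemma directed_leq : directed (fun m n : nat => (m <= n)%N).
Proof.
split=> //; first exact: inhabits 0%N.
- by move=> a b c; apply: leq_trans.
- by move=> a b; exists (maxn a b); rewrite leq_maxl leq_maxr.
Qed.

Section VectorLattice.
Variables (R : realType) (F : lmodType R) (le : F -> F -> Prop) (join : F -> F -> F).
Hypothesis VL : vector_lattice le join.

Local Notation meet := (meet join).
Local Notation absv := (absv join).
Definition pos (x : F) := join x 0.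
Definition neg (x : F) := join (- x) 0.

Lemma le_refl x : le x x. Proof. by case: VL => + _ _ _ _; apply. Qed.
Lemma le_anti x y : le x y -> le y x -> x = y. Proof. by case: VL => _ + _ _ _; apply. Qed.
Local Hint Resolve le_refl : core.
Lemma le_trans x y z : le x y -> le y z -> le x z.
Proof. by case: VL => _ _ + _ _; apply. Qed.
Lemma le_wpZ2l (a : R) x y : 0 <= a -> le x y -> le (a *: x) (a *: y).
Proof. by case: VL => _ _ _ [_ +] _; apply. Qed.

Lemma leD2r x y z : le (x + z) (y + z) <-> le x y.
Proof.
case: VL => _ _ _ [addr _] _; split; last exact: addr.
by move/(addr _ _ (- z)); rewrite !addrK.
Qed.
Lemma leD2l x y z : le (z + x) (z + y) <-> le x y.
Proof. by rewrite ![z + _]addrC; apply: leD2r. Qed.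
Lemma leD x y z w : le x y -> le z w -> le (x + z) (y + w).
Proof.
by move=> /(leD2r _ _ z) xy /(leD2l _ _ y) zw; apply: le_trans xy zw.
Qed.
Lemma subv_ge0 x y : le 0 (y - x) <-> le x y.
Proof. by rewrite -(leD2r _ _ x) add0r subrK. Qed.
Lemma subv_le0 x y : le (x - y) 0 <-> le x y.
Proof. by rewrite -(leD2r _ _ y) add0r subrK. Qed.
Lemma leBlDr x y z : le (x - y) z <-> le x (z + y).
Proof. by rewrite -(leD2r _ _ y) subrK. Qed.
Lemma leN2 x y : le (- x) (- y) <-> le y x.
Proof. by rewrite -subv_ge0 opprK addrC subv_ge0. Qed.
Lemma leDl x y : le 0 y -> le x (x + y).
Proof. by rewrite -(leD2l _ _ x) addr0. Qed.
Lemma addv_ge0 x y : le 0 x -> le 0 y -> le 0 (x + y).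
Proof. by move=> x0 y0; rewrite -(addr0 0); apply: leD. Qed.
Lemma mulrn_ge0 x n : le 0 x -> le 0 (x *+ n).
Proof.
move=> x0; elim: n => [|n IH]; first by rewrite mulr0n.
by rewrite mulrS; apply: addv_ge0.
Qed.
Lemma scalev_ge0 (a : R) x : 0 <= a -> le 0 x -> le 0 (a *: x).
Proof. by move=> a0 x0; rewrite -(scaler0 _ a); apply: le_wpZ2l. Qed.
Lemma oppv_le0 x : le (- x) 0 <-> le 0 x.
Proof. by rewrite -leN2 opprK oppr0. Qed.
Lemma le_wpZ2r (a b : R) x : a <= b -> le 0 x -> le (a *: x) (b *: x).
Proof.
move=> ab x0; apply/subv_ge0; rewrite -scalerBl.
by rewrite -(scaler0 _ (b - a)); apply: le_wpZ2l; rewrite ?subr_ge0.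
Qed.

Lemma joinl x y : le x (join x y). Proof. by case: VL => _ _ _ _ /(_ x y) []. Qed.
Lemma joinr x y : le y (join x y). Proof. by case: VL => _ _ _ _ /(_ x y) [_ []]. Qed.
Lemma join_lub x y z : le x z -> le y z -> le (join x y) z.
Proof. by case: VL => _ _ _ _ /(_ x y) [_ [_]]; apply. Qed.
Local Hint Resolve joinl joinr : core.
Lemma joinC x y : join x y = join y x.
Proof. by apply: le_anti; apply: join_lub. Qed.
Lemma join_mono x x' y y' : le x x' -> le y y' -> le (join x y) (join x' y').
Proof.
by move=> xx' yy'; apply: join_lub; [apply: le_trans xx' _|apply: le_trans yy' _].
Qed.
Lemma joinDr x y z : join (x + z) (y + z) = join x y + z.
Proof.
apply: le_anti; first by apply: join_lub; apply/leD2r.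
by rewrite -(leD2r _ _ (- z)) addrK; apply: join_lub; rewrite -(leD2r _ _ z) subrK.
Qed.

Lemma meetl x y : le (meet x y) x.
Proof. by rewrite -leN2 opprK; apply: joinl. Qed.
Lemma meetr x y : le (meet x y) y.
Proof. by rewrite -leN2 opprK; apply: joinr. Qed.
Lemma meet_glb x y z : le z x -> le z y -> le z (meet x y).
Proof. by move=> zx zy; rewrite -leN2 opprK; apply: join_lub; apply/leN2. Qed.
Lemma meetC x y : meet x y = meet y x.
Proof. by rewrite /Defs.meet joinC. Qed.
Lemma meet_mono x x' y y' : le x x' -> le y y' -> le (meet x y) (meet x' y').
Proof.
move=> xx' yy'; apply: meet_glb.
  exact: le_trans (meetl _ _) xx'.
exact: le_trans (meetr _ _) yy'.
Qed.
Lemma joinN x y : join (- x) (- y) = - meet x y.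
Proof. by rewrite opprK. Qed.
Lemma meetDr x y z : meet (x + z) (y + z) = meet x y + z.
Proof. by rewrite /Defs.meet !opprD joinDr opprD opprK. Qed.
Lemma meetE x y : meet x y = x - pos (x - y).
Proof.
rewrite /Defs.meet.
have -> : join (- x) (- y) = join 0 (x - y) - x by rewrite -joinDr add0r addrC addKr.
by rewrite opprD opprK addrC joinC.
Qed.

Lemma pos_ge0 x : le 0 (pos x). Proof. exact: joinr. Qed.
Lemma pos_ge x : le x (pos x). Proof. exact: joinl. Qed.
Lemma neg_ge0 x : le 0 (neg x). Proof. exact: joinr. Qed.
Local Hint Resolve pos_ge0 pos_ge neg_ge0 : core.
Lemma pos_lub x z : le x z -> le 0 z -> le (pos x) z. Proof. exact: join_lub. Qed.
Lemma pos_mono x y : le x y -> le (pos x) (pos y).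
Proof. by move=> xy; apply: join_mono. Qed.
Lemma pos_neg x : x = pos x - neg x.
Proof.
have := meetE x 0; rewrite /Defs.meet !oppr0 addr0 -/(neg x) => ->.
by rewrite addrC subrK.
Qed.
Lemma meet_pos_neg x : meet (pos x) (neg x) = 0.
Proof. by rewrite meetE -pos_neg subrr. Qed.

Lemma meet0l x : le 0 x -> meet 0 x = 0.
Proof. by move=> x0; apply: le_anti; [apply: meetl|apply: meet_glb]. Qed.

Lemma meetD_eq0 a b c : le 0 a -> le 0 b -> le 0 c ->
  meet a c = 0 -> meet b c = 0 -> meet (a + b) c = 0.
Proof.
move=> a0 b0 c0 ac bc; apply: le_anti; last by apply: meet_glb => //; apply: addv_ge0.
rewrite -bc; apply: meet_glb; last exact: meetr.
apply: le_trans (meet_mono (le_refl _) (leDl c b0)) _.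
by rewrite meetDr ac add0r.
Qed.

Lemma meet_mulrn_neg p u n : le 0 p -> le p (pos u) -> meet (p *+ n) (neg u) = 0.
Proof.
move=> p0 pu; elim: n => [|n IH]; first by rewrite mulr0n meet0l.
rewrite mulrS; apply: meetD_eq0 => //; first exact: mulrn_ge0.
apply: le_anti; last by apply: meet_glb => //; apply: neg_ge0.
by rewrite -(meet_pos_neg u); apply: meet_mono.
Qed.

Lemma sub_le_neg p w : le p (pos w) -> le (p - w) (neg w).
Proof.
by move=> pw; rewrite {1}(pos_neg w) opprB addrA addrAC -[X in le _ X]add0r leD2r subv_le0.
Qed.

Lemma abs_ge x : le x (absv x). Proof. exact: joinl. Qed.
Lemma abs_geN x : le (- x) (absv x). Proof. exact: joinr. Qed.
Local Hint Resolve abs_ge abs_geN : core.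
Lemma abs_lub x e : le x e -> le (- x) e -> le (absv x) e. Proof. exact: join_lub. Qed.
Lemma abs_ge0 x : le 0 (absv x).
Proof.
have : le 0 (absv x *+ 2) by rewrite mulr2n -(subrr x); apply: leD.
have half0 : (0 : R) <= 2%:R^-1 by rewrite invr_ge0 ler0n.
move/(le_wpZ2l half0); rewrite scaler0 -scaler_nat scalerA mulVf ?scale1r //.
by rewrite pnatr_eq0.
Qed.
Local Hint Resolve abs_ge0 : core.
Lemma abs_id x : le 0 x -> absv x = x.
Proof.
move=> x0; apply: le_anti; last exact: abs_ge.
by apply: abs_lub => //; apply: le_trans (proj2 (oppv_le0 x) x0) x0.
Qed.
Lemma absN x : absv (- x) = absv x.
Proof. by rewrite /Defs.absv opprK joinC. Qed.
Lemma abs_add x y : le (absv (x + y)) (absv x + absv y).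
Proof. by apply: abs_lub; rewrite ?opprD; apply: leD. Qed.
Lemma abs_scale (a : R) x : le (absv (a *: x)) (`|a| *: absv x).
Proof.
have abs_pscale b y : 0 <= b -> le (absv (b *: y)) (b *: absv y).
  by move=> b0; apply: abs_lub; rewrite -?scalerN; apply: le_wpZ2l.
have [a0|a0] := lerP 0 a; first by rewrite ger0_norm //; apply: abs_pscale.
rewrite ltr0_norm // -absN -scaleNr; apply: abs_pscale.
by rewrite -(ltr0_norm a0) normr_ge0.
Qed.
Lemma pos_le_abs x : le (pos x) (absv x).
Proof. exact: pos_lub. Qed.
Lemma abs0 : absv 0 = 0. Proof. exact: abs_id. Qed.
Lemma abs_subP z f e : le (absv (z - f)) e <-> le (f - e) z /\ le z (f + e).
Proof.
have leBrl x y : le (x - y) e <-> le (x - e) y by rewrite !leBlDr addrC.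
split=> [ze|[fz zf]].
  split; first by rewrite -leBrl -opprB; apply: le_trans (abs_geN _) ze.
  by rewrite addrC -leBlDr; apply: le_trans (abs_ge _) ze.
by apply: abs_lub; [rewrite leBlDr addrC|rewrite opprB leBrl].
Qed.

Section Sublattice.
Variable E : F -> Prop.
Hypothesis hE : sublattice join E.

Lemma sublat0 : E 0. Proof. by case: hE => -[]. Qed.
Lemma sublatD x y : E x -> E y -> E (x + y). Proof. by case: hE => -[_ + _] _; apply. Qed.
Lemma sublatZ (a : R) x : E x -> E (a *: x). Proof. by case: hE => -[_ _ +] _; apply. Qed.
Lemma sublatB x y : E x -> E y -> E (x - y).
Proof. by move=> Ex Ey; rewrite -scaleN1r; apply/sublatD/sublatZ. Qed.
Lemma sublatU x y : E x -> E y -> E (join x y).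
Proof. by case: hE => _ + Ex Ey => /(_ _ _ Ex Ey) []. Qed.
Lemma sublatI x y : E x -> E y -> E (meet x y).
Proof. by case: hE => _ + Ex Ey => /(_ _ _ Ex Ey) []. Qed.
Lemma sublatMn x n : E x -> E (x *+ n).
Proof. by move=> Ex; rewrite -scaler_nat; apply: sublatZ. Qed.
Lemma sublat_pos x : E x -> E (pos x).
Proof. by move=> Ex; apply: sublatU Ex sublat0. Qed.
Lemma sublat_abs x : E x -> E (absv x).
Proof. by move=> Ex; rewrite /Defs.absv -[- x]sub0r; apply/sublatU/sublatB/Ex/sublat0. Qed.

End Sublattice.

Section Ideal.
Variable I : F -> Prop.
Hypothesis hI : ideal le join I.

Lemma ideal0 : I 0. Proof. by case: hI => -[]. Qed.
Lemma idealD x y : I x -> I y -> I (x + y). Proof. by case: hI => -[_ + _] _; apply. Qed.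
Lemma idealZ (a : R) x : I x -> I (a *: x). Proof. by case: hI => -[_ _ +] _; apply. Qed.
Lemma idealB x y : I x -> I y -> I (x - y).
Proof. by move=> Ix Iy; rewrite -scaleN1r; apply/idealD/idealZ. Qed.
Lemma ideal_solid x y : I x -> le (absv y) (absv x) -> I y.
Proof. by case: hI => _; apply. Qed.

Lemma disj_complD k1 k2 : disj_compl join I k1 -> disj_compl join I k2 ->
  disj_compl join I (k1 + k2).
Proof.
move=> k1I k2I b Ib; apply: le_anti; last exact: meet_glb.
apply: le_trans (meet_mono (abs_add _ _) (le_refl _)) _.
by rewrite meetD_eq0 ?k1I ?k2I.
Qed.

Lemma disj_complN k : disj_compl join I k -> disj_compl join I (- k).
Proof. by move=> kI b Ib; rewrite absN; apply: kI. Qed.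

Lemma le_band_part x h k : I x -> I h -> disj_compl join I k ->
  le x (h + k) -> le x h.
Proof.
move=> Ix Ih kI xhk.
have Id : I (pos (x - h)).
  by apply: (ideal_solid (x := x - h)); [apply: idealB|rewrite abs_id //; apply: pos_le_abs].
have dk : le (pos (x - h)) (absv k).
  by apply: pos_lub => //; apply: le_trans (abs_ge k); rewrite leBlDr addrC.
have d0 : le (pos (x - h)) 0 by rewrite -(kI _ Id) (abs_id (pos_ge0 _)); apply: meet_glb.
by rewrite -subv_le0; apply: le_trans d0.
Qed.

End Ideal.

Lemma ideal_gen_ideal E : ideal le join (ideal_gen le join E).
Proof.
split; first split.
- by move=> I hI _; apply: ideal0.
- by move=> x y hx hy I hI hEI; apply: idealD => //; [apply: hx|apply: hy].
- by move=> a x hx I hI hEI; apply: idealZ => //; apply: hx.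
- by move=> x y hx hxy I hI hEI; apply: (ideal_solid hI (hx I hI hEI) hxy).
Qed.

Lemma ideal_gen_sub E e : E e -> ideal_gen le join E e.
Proof. by move=> he I _; apply. Qed.

Lemma ideal_gen_bounded E x : sublattice join E -> ideal_gen le join E x ->
  exists2 e, E e & le (absv x) e.
Proof.
move=> hE /(_ (fun x => exists2 e, E e & le (absv x) e)); apply.
  split; first split.
  - by exists 0; rewrite ?abs0 //; apply: sublat0.
  - move=> x1 y1 [e1 he1 h1] [e2 he2 h2]; exists (e1 + e2); first exact: sublatD.
    by apply: le_trans (abs_add _ _) _; apply: leD.
  - move=> a x1 [e1 he1 h1]; exists (`|a| *: e1); first exact: sublatZ.
    by apply: le_trans (abs_scale _ _) _; apply: le_wpZ2l.
  - by move=> x1 y1 [e1 he1 h1] h; exists e1 => //; apply: le_trans h h1.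
by move=> e he; exists (absv e); [apply: sublat_abs|].
Qed.

Lemma projection_band_majorant E g : sublattice join E ->
  projection_band le join (ideal_gen le join E) ->
  exists2 e, E e & forall x, ideal_gen le join E x -> le x g -> le x e.
Proof.
move=> hE [hI hdec]; have [gh [gk [hgh [hgk ->]]]] := hdec g.
have [e he ghe] := ideal_gen_bounded hE hgh.
exists e => // x hx xg.
exact: le_trans (le_band_part hI hx hgh hgk xg) (le_trans (abs_ge _) ghe).
Qed.

Lemma mulrn_le_of_meet p c : le 0 c ->
  (forall n, le (meet (p *+ n.+1) (c + p)) c) -> forall n, le (p *+ n) c.
Proof.
move=> c0 hmeet; elim=> [|n IH]; first by rewrite mulr0n.
apply: le_trans (hmeet n); apply: meet_glb => //.
by rewrite mulrSr; apply/leD2r.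
Qed.

Lemma meet_mulrn_le u e f n : le 0 f -> le 0 u -> le u (pos (f - e)) ->
  le (meet (u *+ n) (e + u)) f.
Proof.
move=> f0 u0 ufe; apply/subv_le0; rewrite -meetDr.
rewrite -(meet_mulrn_neg n u0 ufe); apply: meet_mono.
  by rewrite -[X in le _ X]addr0; apply/leD2l; rewrite -oppr0 leN2.
by rewrite addrAC -opprB addrC; apply: sub_le_neg.
Qed.

(* Pointwise: where [p > 0] we have [y <= k - p], and elsewhere [p *+ n]
   vanishes and [y <= e]. *)
Lemma le_join_sub_mulrn y k e p n : le y e -> le 0 p -> le p (pos (k - y)) ->
  le y (join (k - p) (e - p *+ n)).
Proof.
move=> ye p0 pky; apply: le_trans (join_mono (le_refl _) (proj2 (leD2r _ _ _) ye)).
have -> : k - p = (k - y - p) + y by rewrite addrAC subrK.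
have -> : y - p *+ n = - (p *+ n) + y by rewrite addrC.
rewrite joinDr -[X in le X _]add0r leD2r -[k - y - p]opprK opprB joinN -oppr0 leN2.
rewrite -(meet_mulrn_neg n p0 pky) meetC; apply: meet_mono => //.
exact: sub_le_neg.
Qed.

Lemma le_meet_mulrn_of_join k e p n : le k (join (k - p) (e - p *+ n)) ->
  le (meet (p *+ n) (e - k + p)) (e - k).
Proof.
set c := e - k; have -> : k - p = - p + k by rewrite addrC.
have -> : e - p *+ n = (c - p *+ n) + k by rewrite addrAC subrK.
rewrite joinDr -[X in le X _]add0r leD2r -[c - _]opprK opprB joinN -oppr0 leN2 => hle.
rewrite -[p *+ n](subrK c) [c + p]addrC meetDr meetC.
by rewrite -[X in le _ X]add0r leD2r.
Qed.

Hypothesis archi : archimedean le.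

Lemma eq0_of_meet_mulrn p c : le 0 p -> le 0 c ->
  (forall n, le (meet (p *+ n.+1) (c + p)) c) -> p = 0.
Proof. by move=> p0 c0 /(mulrn_le_of_meet c0); apply: archi. Qed.

Section OrderConvergence.
Variable E : F -> Prop.
Hypotheses (hE : sublattice join E) (hreg : regular le E).

Lemma oconv_regular A (leA : A -> A -> Prop) x f :
  oconv_in le E leA x f -> oconv_in le (fun _ => True) leA x f.
Proof. by move=> [G [GE [Ginf Gx]]]; exists G; split=> //; split=> //; apply: hreg. Qed.

Definition eventual_ub A (leA : A -> A -> Prop) (y : A -> F) : F -> Prop :=
  fun e => E e /\ exists a0, forall a, leA a0 a -> le (y a) e.

Lemma inf_pos_sub_tail A (leA : A -> A -> Prop) (y : A -> F) k e0 a0 :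
  (forall a, E (y a)) -> E k -> E e0 ->
  (forall e, eventual_ub leA y e -> le k e) ->
  (forall a, leA a0 a -> le (y a) e0) ->
  inf_in le E (fun z => exists2 a, leA a0 a & z = pos (k - y a)) 0.
Proof.
(* A lower bound [p] of the tail cannot be used to cut [e0] down to the band
   disjoint from [p] inside [E]; the eventual upper bounds
   [join (k - p) (e0 - p *+ n)] of [y] approximate it, and [k] lying below all
   of them forces [p = 0]. *)
move=> Ey Ek Ee0 k_lb ye0; split; first exact: sublat0.
  by move=> _ [a _ ->].
move=> h Eh h_lb; set p := pos h.
have pky a : leA a0 a -> le p (pos (k - y a)).
  by move=> a0a; apply: pos_lub => //; apply: h_lb; exists a.
have ke0 : le k e0 by apply: k_lb; split=> //; exists a0.
suff p0 : p = 0 by rewrite -p0; apply: pos_ge.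
apply: (eq0_of_meet_mulrn (pos_ge0 h) (c := e0 - k)); first by rewrite subv_ge0.
move=> n; apply: le_meet_mulrn_of_join; apply: k_lb; split.
  have Ep : E p by apply: sublat_pos.
  by apply: (sublatU hE); apply: (sublatB hE) => //; apply: (sublatMn hE).
by exists a0 => a a0a; apply: le_join_sub_mulrn (ye0 a a0a) (pos_ge0 h) (pky a a0a).
Qed.

Hypothesis hpb : projection_band le join (ideal_gen le join E).

Lemma lb_eventual_ub_le A (leA : A -> A -> Prop) (y : A -> F) k g a0 :
  (forall a, E (y a)) -> E k -> (forall e, eventual_ub leA y e -> le k e) ->
  (forall a, leA a0 a -> le (y a) g) -> le k g.
Proof.
move=> Ey Ek k_lb yg; have [e0 Ee0 e0_maj] := projection_band_majorant g hE hpb.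
have ye0 a : leA a0 a -> le (y a) e0.
  by move=> a0a; apply: e0_maj (yg a a0a); apply: ideal_gen_sub.
have ZE z : (exists2 a, leA a0 a & z = pos (k - y a)) -> E z.
  by move=> [a _ ->]; apply: (sublat_pos hE); apply: (sublatB hE).
have [_ _ Zinf] := hreg ZE (inf_pos_sub_tail Ey Ek Ee0 k_lb ye0).
have : le (pos (k - g)) 0.
  by apply: Zinf => // _ [a a0a ->]; apply/pos_mono/leD2l; rewrite leN2; apply: yg.
by move/(le_trans (pos_ge _)); rewrite subv_le0.
Qed.

Lemma oconv_projection_band A (leA : A -> A -> Prop) x f :
  directed leA -> (forall a, E (x a)) -> E f ->
  oconv_in le (fun _ => True) leA x f -> oconv_in le E leA x f.
Proof.
move=> [_ reflA _ _] Ex Ef [G [_ [[_ G0 Ginf] Gx]]].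
pose y a := absv (x a - f).
have Ey a : E (y a) by apply: (sublat_abs hE); apply: (sublatB hE).
exists (eventual_ub leA y); split; first by move=> e [].
split; last by move=> e [_ [a0 ye]]; exists a0 => a a0a; apply/abs_subP/ye.
have ub0 e : eventual_ub leA y e -> le 0 e.
  by move=> [_ [a0 ye]]; apply: le_trans (abs_ge0 _) (ye a0 (reflA a0)).
split=> [||h Eh h_lb]; [exact: sublat0|exact: ub0|].
apply: le_trans (pos_ge h) _; apply: Ginf => // g Gg.
have [a0 xg] := Gx g Gg.
apply: (@lb_eventual_ub_le _ leA y _ _ a0) => [//||e ue|a a0a]; first exact: sublat_pos.
  by apply: pos_lub; [apply: h_lb|apply: ub0].
by apply/abs_subP/xg.
Qed.

Lemma regular_projection_band_order_embedding : order_embedding le E.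
Proof.
by move=> A leA x f dirA Ex Ef; split; [apply: oconv_regular|apply: oconv_projection_band].
Qed.

End OrderConvergence.

Lemma directed_sub (S : F -> Prop) x0 : S x0 ->
  (forall u v, S u -> S v -> S (join u v)) ->
  directed (fun u v : {x | S x} => le (sval u) (sval v)).
Proof.
move=> Sx0 SU; split.
- exact: inhabits (exist _ x0 Sx0).
- by move=> u.
- by move=> u v w; apply: le_trans.
- by move=> [u Su] [v Sv]; exists (exist _ _ (SU _ _ Su Sv)); split => /=.
Qed.

Lemma inf_scale_inv_nat f : le 0 f ->
  inf_in le (fun _ => True) (fun g => exists n, g = (n.+1%:R)^-1 *: f) 0.
Proof.
move=> f0; have inv0 n : (0 : R) <= (n.+1%:R)^-1 by rewrite invr_ge0 ler0n.
split=> //; first by move=> _ [n ->]; apply: scalev_ge0.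
move=> h _ hlb; apply: le_trans (pos_ge h) _.
rewrite -(archi (pos_ge0 h) (y := f)) // => n.
have hn : le (pos h) ((n.+1%:R)^-1 *: f).
  by apply: pos_lub; [apply: hlb; exists n|apply: scalev_ge0].
apply: le_trans (_ : le _ (pos h *+ n.+1)) _; first by rewrite mulrSr; apply: leDl.
rewrite -scaler_nat -[f](scalerKV (_ : n.+1%:R != 0 :> R)) ?pnatr_eq0 //.
by apply: le_wpZ2l.
Qed.

Lemma oconv_scale_inv_nat (S : F -> Prop) f : le 0 f -> S 0 ->
  (forall u, S u -> le 0 u /\ le u f) ->
  oconv_in le (fun _ => True)
    (prod_rel (fun u v : {x | S x} => le (sval u) (sval v)) (fun m n => (m <= n)%N))
    (fun a => (a.2.+1%:R)^-1 *: sval a.1) 0.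
Proof.
move=> f0 S0 Sf; exists (fun g => exists n, g = (n.+1%:R)^-1 *: f).
split=> //; split; first exact: inf_scale_inv_nat.
have inv0 n : (0 : R) <= (n.+1%:R)^-1 by rewrite invr_ge0 ler0n.
move=> _ [n ->]; exists (exist _ 0 S0, n) => -[[u Su] m] [_ /= nm].
have [u0 uf] := Sf u Su; rewrite sub0r add0r; split.
  by apply: le_trans (scalev_ge0 _ u0); rewrite // oppv_le0; apply: scalev_ge0.
apply: le_trans (le_wpZ2l (inv0 m) uf) (le_wpZ2r _ f0).
by rewrite lef_pV2 ?posrE ?ltr0Sn // ler_nat.
Qed.

Section OrderEmbedding.
Variable E : F -> Prop.
Hypotheses (hE : sublattice join E) (hemb : order_embedding le E).

Lemma order_embedding_majorant f : le 0 f ->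
  exists e, [/\ E e, le 0 e & forall v, E v -> le 0 v -> le v f -> le v e].
Proof.
move=> f0; pose S u := [/\ E u, le 0 u & le u f].
have S0 : S 0 by split=> //; apply: sublat0.
have SU u v : S u -> S v -> S (join u v).
  by move=> [Eu u0 uf] [Ev v0 vf]; split; [apply: sublatU|apply: le_trans u0 _|apply: join_lub].
have dirA := directed_prod (directed_sub S0 SU) directed_leq.
have xE (a : {x | S x} * nat) : E ((a.2.+1%:R)^-1 *: sval a.1).
  by apply: (sublatZ hE); case: (svalP a.1).
have [G [GE [[_ _ Ginf] Gx]]] := proj2 (hemb dirA xE (sublat0 hE))
  (oconv_scale_inv_nat f0 S0 (fun u '(And3 _ u0 uf) => conj u0 uf)).
have [[g Gg]|noG] := classic (exists g, G g); last first.
  exists 0; split=> //; first exact: sublat0.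
  by move=> v Ev _ _; apply: Ginf => // g Gg; case: noG; exists g.
have [[u1 n0] xg] := Gx g Gg.
have n0_neq0 : (n0.+1%:R : R) != 0 by rewrite pnatr_eq0.
(* [g] bounds the net from the index [(u1, n0)] on, and every [v] can be
   joined into such an index. *)
have e_maj v : E v -> le 0 v -> le v f -> le v (n0.+1%:R *: g).
  move=> Ev v0 vf; have Sv := SU _ _ (And3 Ev v0 vf) (svalP u1).
  have [_ ] := xg (exist _ _ Sv, n0) (conj (joinr _ _) (leqnn n0)).
  rewrite add0r /= => le_g; apply: le_trans (joinl v (sval u1)) _.
  by rewrite -[join v _](scalerKV n0_neq0); apply: le_wpZ2l.
exists (n0.+1%:R *: g); split=> //; first exact: sublatZ (GE g Gg).
by apply: e_maj => //; apply: sublat0.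
Qed.

Hypothesis hden : order_dense le E (ideal_gen le join E).

Lemma disj_compl_pos_sub f e : le 0 f -> E e ->
  (forall v, E v -> le 0 v -> le v f -> le v e) ->
  disj_compl join (ideal_gen le join E) (pos (f - e)).
Proof.
move=> f0 Ee e_maj b Ib; rewrite (abs_id (pos_ge0 _)).
set d := meet (pos (f - e)) (absv b).
have d0 : le 0 d by apply: meet_glb.
apply: NNPP => d_neq0.
have Id : ideal_gen le join E d.
  by apply: (ideal_solid (ideal_gen_ideal E) Ib); rewrite (abs_id d0); apply: meetr.
have [u [Eu [[u0 u_neq0] ud]]] := hden Id (conj d0 (nesym d_neq0)).
have e0 : le 0 e by apply: e_maj => //; apply: sublat0.
apply/u_neq0/esym/(eq0_of_meet_mulrn u0 e0) => n.
apply: e_maj; first by apply: (sublatI hE); [apply: sublatMn|apply: sublatD].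
  by apply: meet_glb; [apply: mulrn_ge0|apply: addv_ge0].
exact: meet_mulrn_le f0 u0 (le_trans ud (meetl _ _)).
Qed.

Lemma order_embedding_projection_band : projection_band le join (ideal_gen le join E).
Proof.
have I_ideal := ideal_gen_ideal E.
have dec_pos f : le 0 f -> exists h k,
    ideal_gen le join E h /\ disj_compl join (ideal_gen le join E) k /\ f = h + k.
  move=> f0; have [e [Ee e0 e_maj]] := order_embedding_majorant f0.
  exists (meet f e), (pos (f - e)); split; last split.
  - apply: (ideal_solid I_ideal (ideal_gen_sub Ee)).
    by rewrite (abs_id e0) abs_id; [apply: meetr|apply: meet_glb].
  - exact: disj_compl_pos_sub.
  - by rewrite meetE subrK.
split=> // f.
have [h1 [k1 [Ih1 [k1I e1]]]] := dec_pos _ (pos_ge0 f).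
have [h2 [k2 [Ih2 [k2I e2]]]] := dec_pos _ (neg_ge0 f).
exists (h1 - h2), (k1 - k2); split; first exact: (idealB I_ideal).
split; first by apply: disj_complD => //; apply: disj_complN.
by rewrite (pos_neg f) e1 e2 opprD addrACA.
Qed.

End OrderEmbedding.

End VectorLattice.

Theorem proposition5p5 (R : realType) (F : lmodType R)
    (le : F -> F -> Prop) (join : F -> F -> F) (E : F -> Prop) :
  vector_lattice le join -> archimedean le ->
  sublattice join E ->
  (regular le E -> projection_band le join (ideal_gen le join E) ->
     order_embedding le E) /\
  (order_dense le E (ideal_gen le join E) -> order_embedding le E ->
     projection_band le join (ideal_gen le join E)).
Proof.
move=> VL archi hE; split=> [hreg hpb|hden hemb].
  exact (regular_projection_band_order_embedding VL archi hE hreg hpb).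
exact (order_embedding_projection_band VL archi hE hemb hden).
Qed.
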